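(* Let $A\in\mathbb{C}^{n\times n}$ and $m\in\mathbb{N}=\{1,2,\dots\}$. Then the system of equations in $X\in\mathbb{C}^{n\times n}$ $$XAX=X,\qquad AX=(A^{\mathrm{cEP}})^mA^mP_{A^m},\qquad XA=(A^{\mathrm{cEP}})^{m+1}A^mP_{A^m}A$$ is consistent and its unique solution is $X=A^{\#_m}$.
   Context: For $A\in\mathbb{C}^{n\times n}$: $A^\dagger$ Moore–Penrose inverse, $P_A=AA^\dagger$, $\mathcal{R}(\cdot)$ column space. The index $k=\mathrm{Ind}(A)$ is the smallest nonnegative integer with $\mathcal{R}(A^k)=\mathcal{R}(A^{k+1})$ ($A^0=I_n$). The core-EP inverse $A^{\mathrm{cEP}}$ is the unique $X$ with $XAX=X$ and $\mathcal{R}(X)=\mathcal{R}(X^* )=\mathcal{R}(A^k)$. For $m\in\mathbb{N}$, the $m$-weak group inverse is $A^{\mathrm{WG}_m}:=(A^{\mathrm{cEP}})^{m+1}A^m$ and the $m$-weak core inverse is $A^{\#_m}:=A^{\mathrm{WG}_m}P_{A^m}$. *)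

From mathcomp Require Import all_boot all_order all_algebra.
From Stdlib Require Import ClassicalEpsilon.
Set Implicit Arguments. Unset Strict Implicit. Unset Printing Implicit Defensive.
Import Order.TTheory GRing.Theory Num.Theory.
Local Open Scope ring_scope.

Section Defs.
Variables (C : numClosedFieldType) (n : nat).
Implicit Types A X : 'M[C]_n.

Definition ctr A : 'M[C]_n := (map_mx (fun x => x^*) A)^T.

Definition mxpow A (k : nat) : 'M[C]_n := iter k (mulmx A) 1%:M.

(* column space equality R(B) = R(D) (column space = row space of transpose) *)
Definition colsp_eq (B D : 'M[C]_n) : bool := (B^T == D^T)%MS.

Definition is_MP A X : Prop :=
  [/\ A *m X *m A = A, X *m A *m X = X,
      ctr (A *m X) = A *m X & ctr (X *m A) = X *m A].

Definition MPinv A : 'M[C]_n := epsilon (inhabits 0) (is_MP A).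

Definition proj A : 'M[C]_n := A *m MPinv A.

Definition is_index A (k : nat) : Prop :=
  colsp_eq (mxpow A k) (mxpow A k.+1) /\
  forall j, (j < k)%N -> ~~ colsp_eq (mxpow A j) (mxpow A j.+1).
Definition ind A : nat := epsilon (inhabits 0%N) (is_index A).

Definition is_cEP A X : Prop :=
  [/\ X *m A *m X = X, colsp_eq X (mxpow A (ind A))
    & colsp_eq (ctr X) (mxpow A (ind A))].
Definition cEP A : 'M[C]_n := epsilon (inhabits 0) (is_cEP A).

Definition WG A (m : nat) : 'M[C]_n := mxpow (cEP A) m.+1 *m mxpow A m.

Definition wcore A (m : nat) : 'M[C]_n := WG A m *m proj (mxpow A m).

End Defs.

(* The m-weak core inverse W = E^(m+1) A^m P, with E = A^cEP and P = P_(A^m),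
   is an outer inverse of A (WAW = W), and any outer inverse X with AX = AW
   and XA = WA equals W, since X = XAX = XAW = WAW.  Everything therefore
   reduces to three identities of E: EAE = E, AE^2 = E and R(E) <= R(A^j) for
   every j.  The last one comes from R(E) = R(A^k) with k = Ind(A), and
   AE^2 = E holds because AE^2 - E lies in R(A^k) = R(E^* ) and is annihilated
   by E.  As A^dagger, Ind(A) and A^cEP are defined by choice, their existence
   is needed too: A^dagger comes from a full-rank factorization, the ranks of
   the A^k must stabilize, and A^cEP = A^k (A^(k+1))^dagger. *)
From mathcomp Require Import all_boot all_order all_algebra zify.
From Stdlib Require Import ClassicalEpsilon Classical.
Set Implicit Arguments. Unset Strict Implicit. Unset Printing Implicit Defensive.
Import Order.TTheory GRing.Theory Num.Theory.
Local Open Scope ring_scope.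

Section ConjugateTranspose.
Variable C : numClosedFieldType.

Definition ctmx p q (M : 'M[C]_(p, q)) : 'M[C]_(q, p) :=
  (map_mx (fun x => x^*) M)^T.

Lemma ctrE n (A : 'M[C]_n) : ctr A = ctmx A.
Proof. by []. Qed.

Lemma ctmxM p q r (M : 'M[C]_(p, q)) (N : 'M[C]_(q, r)) :
  ctmx (M *m N) = ctmx N *m ctmx M.
Proof. by rewrite /ctmx map_mxM trmx_mul. Qed.

Lemma ctmxK p q (M : 'M[C]_(p, q)) : ctmx (ctmx M) = M.
Proof. by apply/matrixP => i j; rewrite !mxE conjCK. Qed.

Lemma ctmx_inv p (M : 'M[C]_p) : ctmx (invmx M) = invmx (ctmx M).
Proof. by rewrite /ctmx (map_invmx Num.conj) trmx_inv. Qed.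

Lemma mxrank_ctmx p q (M : 'M[C]_(p, q)) : \rank (ctmx M) = \rank M.
Proof. by rewrite mxrank_tr (mxrank_map Num.conj). Qed.

Lemma mulmx_ctmx_eq0 p q (M : 'M[C]_(p, q)) : M *m ctmx M = 0 -> M = 0.
Proof.
move=> MM0; apply/matrixP => i j; rewrite mxE.
have := congr1 (fun N : 'M[C]_p => N i i) MM0; rewrite !mxE => /psumr_eq0P.
have nonneg k : true -> 0 <= M i k * ctmx M k i by rewrite !mxE mul_conjC_ge0.
move=> /(_ nonneg j isT)/eqP.
by rewrite !mxE mul_conjC_eq0 => /eqP.
Qed.

Lemma ctmx_mulmx_eq0 p q (M : 'M[C]_(p, q)) : ctmx M *m M = 0 -> M = 0.
Proof.
move=> MM0; rewrite -[M]ctmxK.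
have -> : ctmx M = 0 by apply: mulmx_ctmx_eq0; rewrite ctmxK.
by apply/matrixP => i j; rewrite !mxE conjC0.
Qed.

Lemma ctmx_range_ker_eq0 p q r (E : 'M[C]_(p, q)) (Y : 'M[C]_(p, r)) :
  E *m (ctmx E *m Y) = 0 -> ctmx E *m Y = 0.
Proof.
move=> EM0; apply: ctmx_mulmx_eq0.
by rewrite ctmxM ctmxK -mulmxA EM0 mulmx0.
Qed.

Lemma unitmx_gram p q (G : 'M[C]_(p, q)) : row_free G -> G *m ctmx G \in unitmx.
Proof.
move=> freeG; rewrite -row_free_unit; apply: inj_row_free => v vGG0.
apply/eqP; rewrite -(mulmx_free_eq0 v freeG); apply/eqP/mulmx_ctmx_eq0.
by rewrite ctmxM mulmxA -(mulmxA v) vGG0 mul0mx.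
Qed.

End ConjugateTranspose.

Section MoorePenrose.
Variables (C : numClosedFieldType) (n : nat).
Implicit Types A B : 'M[C]_n.

Lemma is_MP_rank_factorization r (F : 'M[C]_(n, r)) (G : 'M[C]_(r, n)) :
  row_full F -> row_free G ->
  is_MP (F *m G)
    (ctmx G *m invmx (G *m ctmx G) *m invmx (ctmx F *m F) *m ctmx F).
Proof.
move=> fullF freeG.
have uG := unitmx_gram freeG.
have uF : ctmx F *m F \in unitmx.
  by rewrite -{2}[F]ctmxK unitmx_gram // /row_free mxrank_ctmx.
set HG := G *m ctmx G in uG *; set HF := ctmx F *m F in uF *.
have hermG : ctmx (invmx HG) = invmx HG by rewrite ctmx_inv /HG ctmxM ctmxK.
have hermF : ctmx (invmx HF) = invmx HF by rewrite ctmx_inv /HF ctmxM ctmxK.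
have AX : F *m G *m (ctmx G *m invmx HG *m invmx HF *m ctmx F)
          = F *m invmx HF *m ctmx F.
  by rewrite -!mulmxA (mulmxA G) (mulmxA HG) mulmxV // mul1mx.
have XA : ctmx G *m invmx HG *m invmx HF *m ctmx F *m (F *m G)
          = ctmx G *m invmx HG *m G.
  by rewrite -!mulmxA (mulmxA (ctmx F)) (mulmxA (invmx HF)) mulVmx // mul1mx.
split.
- by rewrite AX -!mulmxA (mulmxA (ctmx F)) (mulmxA (invmx HF)) mulVmx // mul1mx.
- by rewrite XA -!mulmxA (mulmxA G) (mulmxA HG) mulmxV // mul1mx.
- by rewrite ctrE AX !ctmxM ctmxK hermF mulmxA.
- by rewrite ctrE XA !ctmxM ctmxK hermG mulmxA.
Qed.

Lemma MPinv_spec A : is_MP A (MPinv A).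
Proof.
apply: epsilon_spec; rewrite -(mulmx_base A).
by eexists; apply: is_MP_rank_factorization; [exact: col_base_full | exact: row_base_free].
Qed.

Lemma proj_mulmx p B (Z : 'M[C]_(n, p)) : proj B *m (B *m Z) = B *m Z.
Proof. by have [BXB _ _ _] := MPinv_spec B; rewrite /proj mulmxA BXB. Qed.

End MoorePenrose.

Section Index.
Variables (C : numClosedFieldType) (n : nat).
Implicit Types A B D : 'M[C]_n.

Lemma mxpowSr A k : mxpow A k.+1 = mxpow A k *m A.
Proof.
elim: k => [|k IHk]; first by rewrite /mxpow /= mulmx1 mul1mx.
by rewrite -[mxpow A k.+2]/(A *m mxpow A k.+1) {1}IHk mulmxA.
Qed.

Lemma mxpowD A a b : mxpow A (a + b) = mxpow A a *m mxpow A b.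
Proof.
elim: a => [|a IHa]; first by rewrite add0n /mxpow /= mul1mx.
by rewrite addSn -[mxpow A (a + b).+1]/(A *m mxpow A (a + b)) IHa mulmxA.
Qed.

Lemma colsubP B D : (B^T <= D^T)%MS <-> exists Z, B = D *m Z.
Proof.
split; last by case=> Z ->; rewrite trmx_mul submxMl.
by case/submxP => Z BZ; exists Z^T; rewrite -[B]trmxK BZ trmx_mul trmxK.
Qed.

Lemma colsp_eqP B D :
  colsp_eq B D <-> (exists Z, B = D *m Z) /\ (exists Z, D = B *m Z).
Proof.
rewrite /colsp_eq; split; first by case/andP => /colsubP ? /colsubP.
by case=> /colsubP ? /colsubP ?; apply/andP.
Qed.

Lemma mxrank_colsp_eq B D : colsp_eq B D -> \rank B = \rank D.
Proof. by move/eqmx_rank; rewrite !mxrank_tr. Qed.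

Lemma colsub_mxpowS A k : ((mxpow A k.+1)^T <= (mxpow A k)^T)%MS.
Proof. by apply/colsubP; exists A; rewrite mxpowSr. Qed.

Lemma colsp_mxpow_stable A : exists k, colsp_eq (mxpow A k) (mxpow A k.+1).
Proof.
apply: NNPP => unstable.
have rank_drop k : (\rank (mxpow A k.+1) < \rank (mxpow A k))%N.
  have [le_rank eq_rank] := mxrank_leqif_eq (colsub_mxpowS A k).
  rewrite -!(mxrank_tr (mxpow A _)) ltn_neqAle le_rank eq_rank andbT.
  by apply/negP => stable; apply: unstable; exists k; apply/andP; case/andP: stable.
have rank_bound k : (\rank (mxpow A k) + k <= n)%N.
  by elim: k => [|k IHk]; [rewrite addn0 rank_leq_row | have := rank_drop k; lia].
by have := rank_bound n.+1; lia.
Qed.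

Lemma ind_spec A : is_index A (ind A).
Proof.
apply: epsilon_spec; have [k stable_k min_k] := ex_minnP (colsp_mxpow_stable A).
by exists k; split=> // j lt_jk; apply/negP => /min_k; lia.
Qed.

Lemma colsub_mxpow_ind A j : exists Z, mxpow A (ind A) = mxpow A j *m Z.
Proof.
set k := ind A; have [[Z0 AkZ0] _] := (colsp_eqP _ _).1 (ind_spec A).1.
have [le_jk | lt_kj] := leqP j k.
  by exists (mxpow A (k - j)); rewrite -mxpowD subnKC.
suff [Z ->] : exists Z, mxpow A k = mxpow A (k + (j - k)) *m Z.
  by exists Z; rewrite subnKC // ltnW.
elim: (j - k)%N => [|i [Z AkZ]]; first by exists 1%:M; rewrite addn0 mulmx1.
exists (Z *m Z0); rewrite addnS AkZ0 [mxpow A k.+1]/= {1}AkZ.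
by rewrite !mulmxA.
Qed.

Lemma rowsub_mxpow_ind A : exists W, mxpow A (ind A) = W *m mxpow A (ind A).+1.
Proof.
apply/submxP; have le_Ak : (mxpow A (ind A).+1 <= mxpow A (ind A))%MS.
  exact: submxMl.
have [_ <-] := mxrank_leqif_sup le_Ak.
by rewrite (mxrank_colsp_eq (ind_spec A).1).
Qed.

End Index.

Section CoreEP.
Variables (C : numClosedFieldType) (n : nat).
Implicit Types A : 'M[C]_n.

Lemma is_cEP_formula A :
  is_cEP A (mxpow A (ind A) *m MPinv (mxpow A (ind A).+1)).
Proof.
have [W AkW] := rowsub_mxpow_ind A.
have [[Z0 AkZ0] _] := (colsp_eqP _ _).1 (ind_spec A).1.
rewrite /is_cEP ctrE; set k := ind A in AkW AkZ0 *.
set B := mxpow A k.+1 in AkW AkZ0 *.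
have AAk : A *m mxpow A k = B by [].
have AkA : mxpow A k *m A = B by rewrite -mxpowSr.
clearbody B.
have [BXB XBX hermBX _] := MPinv_spec B; rewrite ctrE in hermBX.
set Bd := MPinv B in BXB XBX hermBX *; set X := mxpow A k *m Bd.
have AX : A *m X = B *m Bd by rewrite mulmxA AAk.
have XAX : X *m A *m X = X.
  by rewrite -!mulmxA (mulmxA A) AAk (mulmxA Bd) XBX.
split=> //; apply/colsp_eqP; split.
- by exists Bd.
- by exists B; rewrite /X {2}AkW -!mulmxA (mulmxA B Bd) BXB -AkW.
- exists (A *m (Bd *m ctmx X)).
  by rewrite -{1}XAX -mulmxA AX ctmxM hermBX -AkA !mulmxA.
- exists (ctmx A *m B *m Z0).
  by rewrite {1}AkZ0 -{1}BXB -hermBX -AX ctmxM !mulmxA.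
Qed.

Lemma cEP_spec A : is_cEP A (cEP A).
Proof. by apply: epsilon_spec; eexists; apply: is_cEP_formula. Qed.

Lemma cEP_colsub A j : exists Z, cEP A = mxpow A j *m Z.
Proof.
have [_ /colsp_eqP [[Z1 EZ1] _] _] := cEP_spec A.
by have [Z AkZ] := colsub_mxpow_ind A j; exists (Z *m Z1); rewrite EZ1 AkZ mulmxA.
Qed.

Lemma A_cEP_cEP A : A *m cEP A *m cEP A = cEP A.
Proof.
have [EAE /colsp_eqP [[Z1 EZ1] _] /colsp_eqP [_ [Z4 AkZ4]]] := cEP_spec A.
set E := cEP A in EAE EZ1 AkZ4 *; rewrite ctrE in AkZ4.
have range : A *m E *m E - E = ctmx E *m (Z4 *m (A *m Z1 *m E - Z1)).
  rewrite mulmxA -AkZ4 mulmxBr !mulmxA -mxpowSr.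
  by rewrite -[mxpow A _.+1]/(A *m mxpow A _) -(mulmxA A _ Z1) -EZ1.
apply/eqP; rewrite -subr_eq0 range; apply/eqP/ctmx_range_ker_eq0.
by rewrite -range mulmxBr !mulmxA EAE subrr.
Qed.

End CoreEP.

Section WeakCore.
Variables (C : numClosedFieldType) (n : nat).

Lemma outer_inverse_eqP (A W X : 'M[C]_n) : W *m A *m W = W ->
  [/\ X *m A *m X = X, A *m X = A *m W & X *m A = W *m A] <-> X = W.
Proof.
move=> WAW; split=> [[XAX AX XA] | ->] //.
by rewrite -XAX -mulmxA AX mulmxA XA WAW.
Qed.

Variables (A E P : 'M[C]_n).
Hypotheses (EAE : E *m A *m E = E) (AEE : A *m E *m E = E) (PE : P *m E = E).

Lemma mulmx_mxpowSS j : A *m mxpow E j.+2 = mxpow E j.+1.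
Proof. by rewrite -[mxpow E j.+2]/(E *m (E *m mxpow E j)) !mulmxA AEE. Qed.

Lemma mxpow_mulmx_mxpowS j : mxpow A j *m mxpow E j.+1 = E.
Proof.
elim: j => [|j IHj]; first by rewrite /mxpow /= mul1mx mulmx1.
by rewrite mxpowSr -mulmxA mulmx_mxpowSS.
Qed.

Lemma proj_mxpowS j : P *m mxpow E j.+1 = mxpow E j.+1.
Proof. by rewrite -[mxpow E j.+1]/(E *m mxpow E j) mulmxA PE. Qed.

Lemma weak_core_outer j :
  let W := mxpow E j.+2 *m mxpow A j.+1 *m P in W *m A *m W = W.
Proof.
have PAE : P *m A *m mxpow E j.+2 = mxpow E j.+1.
  by rewrite -mulmxA mulmx_mxpowSS proj_mxpowS.
have AE : mxpow A j.+1 *m mxpow E j.+1 = A *m E.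
  by rewrite -[mxpow A j.+1]/(A *m mxpow A j) -mulmxA mxpow_mulmx_mxpowS.
have EAE2 : mxpow E j.+2 *m A *m E = mxpow E j.+2.
  by rewrite (mxpowSr E j.+1) -!mulmxA (mulmxA E A) EAE.
(* Generalize the powers: otherwise [mulmxA] unfolds them, as
   [mxpow E j.+1] reduces to [E *m mxpow E j]. *)
move=> W; rewrite {}/W.
move: (mxpow E j.+2) (mxpow E j.+1) (mxpow A j.+1) PAE AE EAE2.
move=> E2 E1 A1 PAE AE EAE2.
rewrite !mulmxA -(mulmxA _ P A) -(mulmxA _ (P *m A)) PAE.
by rewrite -(mulmxA E2) AE mulmxA EAE2.
Qed.

End WeakCore.

Theorem theorem4p8 (C : numClosedFieldType) (n : nat) (A : 'M[C]_n) (m : nat) :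
  (0 < m)%N ->
  forall X : 'M[C]_n,
    [/\ X *m A *m X = X,
        A *m X = mxpow (cEP A) m *m mxpow A m *m proj (mxpow A m)
      & X *m A = mxpow (cEP A) m.+1 *m mxpow A m *m proj (mxpow A m) *m A]
    <-> X = wcore A m.
Proof.
case: m => // m _ X.
have [EAE _ _] := cEP_spec A.
have [Z EZ] := cEP_colsub A m.+1.
have PE : proj (mxpow A m.+1) *m cEP A = cEP A by rewrite EZ proj_mulmx.
have AW : A *m wcore A m.+1
          = mxpow (cEP A) m.+1 *m mxpow A m.+1 *m proj (mxpow A m.+1).
  by rewrite /wcore /WG mulmxA (mulmxA A (mxpow _ _)) (mulmx_mxpowSS (A_cEP_cEP A)).
rewrite -(outer_inverse_eqP _ (weak_core_outer EAE (A_cEP_cEP A) PE m)).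
by rewrite AW.
Qed.
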